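(* Let $(S,\Delta,\mathbb{P})$ be a probability space, $(U,d)$ a separable metric space, $\mathfrak{X}$ the set of $U$-valued random variables on $S$, $\mathcal{I}$ an ideal on $\mathbb{N}$, $r\geq 0$, and $\{X_n\}_{n\in\mathbb{N}}$ a sequence in $\mathfrak{X}$. Then the set $\mathcal{I}^{\mathbb{P}}\text{-}LIM^rX_i$ is closed in $(\mathfrak{X}^0,\rho)$.
   Context: The Ky Fan metric is $\rho(X,Y)=\inf\{\varepsilon>0:\mathbb{P}(d(X,Y)>\varepsilon)\leq\varepsilon\}$; $\mathfrak{X}^0$ is the set of equivalence classes of $\mathfrak{X}$ under almost sure equality, on which $\rho$ is a metric. An ideal on $\mathbb{N}$ is a family $\mathcal{I}\subseteq\mathcal{P}(\mathbb{N})$ with $\varnothing\in\mathcal{I}$, closed under finite unions and under subsets. A sequence $\{X_n\}$ in $\mathfrak{X}$ is rough $\mathcal{I}$-convergent in probability to $X_*\in\mathfrak{X}$ with degree of roughness $r$ if $\{n\in\mathbb{N}:\mathbb{P}(d(X_n,X_* )>r+\varepsilon)>\delta\}\in\mathcal{I}$ for every $\varepsilon,\delta>0$; $\mathcal{I}^{\mathbb{P}}\text{-}LIM^rX_i$ denotes the set of all such $X_*$. *)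

From mathcomp Require Import all_boot all_order all_algebra.
From mathcomp Require Import all_classical all_reals all_analysis.
Set Implicit Arguments. Unset Strict Implicit. Unset Printing Implicit Defensive.
Import Order.TTheory GRing.Theory Num.Theory.
Local Open Scope classical_set_scope.
Local Open Scope ring_scope.

Definition is_metric {R : realType} {U : Type} (dist : U -> U -> R) : Prop :=
  (forall x y, 0 <= dist x y) /\
  (forall x y, dist x y = 0 <-> x = y) /\
  (forall x y, dist x y = dist y x) /\
  (forall x y z, dist x z <= dist x y + dist y z).

Definition separable_metric {R : realType} {U : Type} (dist : U -> U -> R) : Prop :=
  exists D : set U, countable D /\
    forall x (e : R), 0 < e -> exists y, D y /\ dist x y < e.

Definition metric_open {R : realType} {U : Type} (dist : U -> U -> R) (A : set U) : Prop :=
  forall x, A x -> exists e : R, 0 < e /\ forall y, dist x y < e -> A y.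

Definition is_rv {R : realType} {d : measure_display} {S : measurableType d}
  {U : Type} (dist : U -> U -> R) (X : S -> U) : Prop :=
  forall B : set U, <<s metric_open dist >> B -> measurable (X @^-1` B).

Definition is_ideal (I : set (set nat)) : Prop :=
  I set0 /\
  (forall A B, I A -> I B -> I (A `|` B)) /\
  (forall A B, B `<=` A -> I A -> I B).

Definition kyfan {R : realType} {d : measure_display} {S : measurableType d}
  (P : probability S R) {U : Type} (dist : U -> U -> R) (X Y : S -> U) : R :=
  inf [set e : R | 0 < e /\ (P [set s | (e < dist (X s) (Y s))%R] <= e%:E)%E].

Definition rough_I_conv {R : realType} {d : measure_display} {S : measurableType d}
  (P : probability S R) {U : Type} (dist : U -> U -> R) (I : set (set nat))
  (r : R) (X : nat -> S -> U) (Xs : S -> U) : Prop :=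
  forall eps delta : R, 0 < eps -> 0 < delta ->
    I [set n | (delta%:E < P [set s | (r + eps < dist (X n s) (Xs s))%R])%E].

Definition rough_I_LIM {R : realType} {d : measure_display} {S : measurableType d}
  (P : probability S R) {U : Type} (dist : U -> U -> R) (I : set (set nat))
  (r : R) (X : nat -> S -> U) : set (S -> U) :=
  [set Y | is_rv dist Y /\ rough_I_conv P dist I r X Y].

From mathcomp Require Import all_boot all_order all_algebra.
From mathcomp Require Import all_classical all_reals all_analysis.
From mathcomp Require Import lra.
Set Implicit Arguments.
Unset Strict Implicit.
Unset Printing Implicit Defensive.
Import Order.TTheory GRing.Theory Num.Theory.
Local Open Scope classical_set_scope.
Local Open Scope ring_scope.

(* Let Y be in the rho-closure of LIM and eps, delta > 0.  Pick Z in LIM with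
   rho(Z, Y) < min(eps/2, delta/2); then P(d(Z, Y) > e) <= e for some
   e < min(eps/2, delta/2).  By the triangle inequality
     P(d(X_n, Y) > r + eps) <= P(d(X_n, Z) > r + eps/2) + e,
   so every n that is bad for (Y, eps, delta) is bad for (Z, eps/2, delta/2),
   and those n form a member of the ideal.  Separability of U is what makes
   the events {d(X, Y) > c} measurable. *)

Section metric.
Variables (R : realType) (U : Type) (dist : U -> U -> R).
Hypothesis dist_metric : is_metric dist.

Lemma metric_open_dist_lt (q : U) (t : R) :
  metric_open dist [set x | dist x q < t].
Proof.
have [_ [_ [dsym dtri]]] := dist_metric.
move=> x /= hx; exists (t - dist x q); split; first by rewrite subr_gt0.
by move=> y hy; have := dtri y x q; rewrite (dsym y x); lra.
Qed.

Lemma metric_open_dist_gt (q : U) (a : R) :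
  metric_open dist [set y | a < dist q y].
Proof.
have [_ [_ [dsym dtri]]] := dist_metric.
move=> y /= hy; exists (dist q y - a); split; first by rewrite subr_gt0.
by move=> z hz; have := dtri q z y; rewrite (dsym z y); lra.
Qed.

Lemma dense_dist_gtP (D : set U) (c : R) (x y : U) :
  (forall x (e : R), 0 < e -> exists q, D q /\ dist x q < e) ->
  c < dist x y <->
  exists k : nat, exists2 q, D q &
    dist x q < k.+1%:R^-1 /\ c + k.+1%:R^-1 < dist q y.
Proof.
have [_ [_ [dsym dtri]]] := dist_metric.
move=> D_dense; split => [cxy | [k [q _]]]; last first.
  set t := k.+1%:R^-1 => -[xq qy].
  by have := dtri q x y; rewrite (dsym q x); lra.
have [k hk] := @ltr_add_invr R ((c + dist x y) / 2) (dist x y) ltac:(lra).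
move: hk; set t := k.+1%:R^-1 => hk.
have [q [Dq xq]] := D_dense x t ltac:(by rewrite invr_gt0).
by exists k, q => //; rewrite -/t; have := dtri x q y; lra.
Qed.

End metric.

Lemma countable_bigcup_measurable (d : measure_display) (T : sigmaRingType d)
    (I : Type) (D : set I) (F : I -> set T) :
  countable D -> (forall i, D i -> measurable (F i)) ->
  measurable (\bigcup_(i in D) F i).
Proof.
move=> cD mF; rewrite bigcup_set_type.
apply: countable_bigcupT_measurable => [|i]; last exact/mF/set_valP.
by rewrite (eq_countable (card_setT D)).
Qed.

Section random_variables.
Variables (R : realType) (d : measure_display) (S : measurableType d).
Variables (U : Type) (dist : U -> U -> R).
Hypotheses (dist_metric : is_metric dist) (dist_separable : separable_metric dist).

Lemma measurable_dist_gt (X Y : S -> U) (c : R) :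
  is_rv dist X -> is_rv dist Y -> measurable [set s | c < dist (X s) (Y s)].
Proof.
move=> rvX rvY; have [D [cD D_dense]] := dist_separable.
have -> : [set s | c < dist (X s) (Y s)] =
    \bigcup_k \bigcup_(q in D) (X @^-1` [set x | dist x q < k.+1%:R^-1] `&`
                               Y @^-1` [set y | c + k.+1%:R^-1 < dist q y]).
  apply/seteqP; split => s /=.
  - move=> /(dense_dist_gtP dist_metric _ _ _ D_dense) [k [q Dq hq]].
    by exists k => //; exists q.
  - case=> k _ [q Dq hq].
    by apply/(dense_dist_gtP dist_metric _ _ _ D_dense); exists k, q.
apply: bigcupT_measurable => k; apply: countable_bigcup_measurable => // q _.
apply: measurableI; [apply: rvX | apply: rvY]; apply: sub_sigma_algebra.
- exact: metric_open_dist_lt.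
- exact: metric_open_dist_gt.
Qed.

Lemma measure_dist_gt_le (mu : {measure set S -> \bar R}) (X Y Z : S -> U)
    (a b c : R) :
  is_rv dist X -> is_rv dist Y -> is_rv dist Z -> a + b <= c ->
  (mu [set s | (c < dist (X s) (Y s))%R] <=
   mu [set s | (a < dist (X s) (Z s))%R] + mu [set s | (b < dist (Z s) (Y s))%R])%E.
Proof.
move=> rvX rvY rvZ abc; have [_ [_ [_ dtri]]] := dist_metric.
have mXY := measurable_dist_gt c rvX rvY.
have mXZ := measurable_dist_gt a rvX rvZ.
have mZY := measurable_dist_gt b rvZ rvY.
apply: le_trans (measureU2 _ mXZ mZY).
apply: le_measure; rewrite ?inE //; first exact: measurableU.
move=> s /= cXY; have := dtri (X s) (Z s) (Y s).
by case: (ltP a (dist (X s) (Z s))) => ?; [left | right => /=]; lra.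
Qed.

Lemma kyfan_lt_tail (P : probability S R) (Z Y : S -> U) (e : R) :
  is_rv dist Z -> is_rv dist Y -> kyfan P dist Z Y < e ->
  exists2 e', e' < e & (P [set s | (e' < dist (Z s) (Y s))%R] <= e'%:E)%E.
Proof.
move=> rvZ rvY /inf_lt[|e' [_ Pe'] e'e]; last by exists e'.
exists 1; split => //; apply: probability_le1.
exact: measurable_dist_gt.
Qed.

End random_variables.

Theorem theorem2p2 (R : realType) (d : measure_display) (S : measurableType d)
  (P : probability S R) (U : Type) (dist : U -> U -> R)
  (Hmet : is_metric dist) (Hsep : separable_metric dist)
  (I : set (set nat)) (HI : is_ideal I) (r : R) (Hr : 0 <= r)
  (X : nat -> S -> U) (HX : forall n, is_rv dist (X n)) :
  forall Y : S -> U, is_rv dist Y ->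
    (forall e : R, 0 < e ->
       exists Z, rough_I_LIM P dist I r X Z /\ kyfan P dist Z Y < e) ->
    rough_I_LIM P dist I r X Y.
Proof.
move=> Y rvY Y_closure; split => // eps delta eps0 delta0.
have [_ [_ I_sub]] := HI.
have [Z [[rvZ Z_conv] ZY]] :=
  Y_closure (Num.min (eps / 2) (delta / 2)) ltac:(by rewrite lt_min !divr_gt0).
have [e + PZY] := kyfan_lt_tail Hmet Hsep rvZ rvY ZY.
rewrite lt_min => /andP[e_eps e_delta].
apply: I_sub (Z_conv (eps / 2) (delta / 2) ltac:(lra) ltac:(lra)) => n /= bad_n.
rewrite ltNge; apply/negP => good_n.
have split_eps : r + eps / 2 + e <= r + eps by lra.
have XY_le := measure_dist_gt_le Hmet Hsep P (HX n) rvY rvZ split_eps.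
have := lt_le_trans bad_n (le_trans XY_le (leeD good_n PZY)).
by rewrite -EFinD lte_fin; lra.
Qed.
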